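(* Let $\mathfrak g$ be a $9$-dimensional filiform Lie algebra with associated triple $(5,6,9)$, with parameters $\alpha_1,\alpha_2,\gamma_1,\gamma_2,\beta_{12},\beta_{22},\beta_{13},\beta_{23},\beta_{33}$ with respect to an adapted basis $\{e_h\}$. Then $\alpha_1=0$, $(2\alpha_2+3\gamma_1)(\alpha_2-\gamma_1)=0$ and $\gamma_1\ne0$; moreover $[C^3\mathfrak g,C^3\mathfrak g]=[C^3\mathfrak g,C^4\mathfrak g]=\langle e_2\rangle$, $[C^3\mathfrak g,C^5\mathfrak g]=\{0\}$, $[C^2\mathfrak g,C^6\mathfrak g]=\{0\}$, $[C^2\mathfrak g,C^5\mathfrak g]=\langle e_2\rangle$, $[C^2\mathfrak g,C^4\mathfrak g]=\langle e_2,e_3\rangle$, $[C^2\mathfrak g,C^2\mathfrak g]=[C^2\mathfrak g,C^3\mathfrak g]=\langle e_2,e_3,e_4\rangle$. Consequently every such $\mathfrak g$ has the same Hilbert polynomial: $$\mathrm{HP}_{\mathfrak g}-\mathrm{HP}^{(0)}_{\mathfrak g}=3(t^2s^2+t^2s^3+t^3s^2)+2(t^2s^4+t^4s^2)+(t^2s^5+t^5s^2)+(t^3s^3+t^3s^4+t^4s^3).$$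
   Context: All Lie algebras are over $\mathbb C$; $C^1\mathfrak g=\mathfrak g$, $C^k\mathfrak g=[C^{k-1}\mathfrak g,\mathfrak g]$. A Lie algebra is filiform if $\dim\mathfrak g=n\ge2$ and $\dim C^k\mathfrak g=n-k$ for $2\le k\le n$. An adapted basis of a filiform $\mathfrak g$ is a basis $\{e_1,\dots,e_n\}$ with $[e_1,e_h]=e_{h-1}$ ($3\le h\le n$), $[e_2,e_h]=0$ ($1\le h\le n$), $[e_3,e_h]=0$ ($2\le h\le n$); then $C^k\mathfrak g=\langle e_2,\dots,e_{n-k+1}\rangle$. For non-model filiform $\mathfrak g$, $z_1=\min\{k\ge4:[e_k,e_n]\ne0\}$, $z_2=\min\{k\ge4:[e_k,e_{k+1}]\ne0\}$ (in any adapted basis) are invariants; $(z_1,z_2,n)$ is the associated triple. $P_h(u)$ is the $h$-th coordinate of $u$ in $\{e_h\}$. General law (known result) for triple $(z_1,z_2,n)$: there are complex numbers $\alpha_i$ ($1\le i\le z_2-z_1+1$), $\gamma_j$ ($1\le j\le n-z_2-1$), $\beta_{k\ell}$ ($2\le\ell\le n-z_2$, $1\le k<z_2-z_1+\ell$), the parameters, with $[e_1,e_h]=e_{h-1}$; $[e_{z_1+i},e_{z_2+1}]=\alpha_1e_{i+2}+\dots+\alpha_{i+1}e_2$ ($0\le i\le z_2-z_1$); $[e_{z_1},e_{z_2+j}]=\alpha_1e_{j+1}+\gamma_1e_j+\dots+\gamma_{j-1}e_2$ ($2\le j\le n-z_2$); $[e_{z_1+k},e_{z_2+\ell}]=\sum_{h=2}^{k+\ell}P_h([e_{z_1+k-1},e_{z_2+\ell}]+[e_{z_1+k},e_{z_2+\ell-1}])e_{h+1}+\beta_{k\ell}e_2$;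 all other brackets $[e_a,e_b]$, $2\le a<b$, zero. For $(5,6,9)$ the parameters are $\alpha_1,\alpha_2,\gamma_1,\gamma_2,\beta_{12},\beta_{22},\beta_{13},\beta_{23},\beta_{33}$. Hilbert polynomial: $\mathrm{HP}_{\mathfrak g}(t,s)=\sum_{k,\ell\ge1}\dim[C^k\mathfrak g,C^\ell\mathfrak g]\,t^ks^\ell$; $\mathrm{HP}^{(0)}_{\mathfrak g}=(n-2)ts+\sum_{2\le k\le n-2}(n-k-1)(t^ks+ts^k)$. *)

(* Lie algebras over C (modelled by an arbitrary
   numClosedFieldType), finite-dimensional via vector.v. *)
From HB Require Import structures.
From mathcomp Require Import all_boot all_order all_algebra.
From mathcomp Require Import mpoly.
Set Implicit Arguments. Unset Strict Implicit. Unset Printing Implicit Defensive.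
Import Order.TTheory GRing.Theory Num.Theory.
Local Open Scope ring_scope.

Section LieDefs.
Variables (C : numClosedFieldType) (V : vectType C).
Implicit Types (f : V -> V -> V).

Definition is_lie_bracket f : Prop :=
  [/\ (forall (c : C) x y z, f (c *: x + y) z = c *: f x z + f y z),
      (forall (c : C) x y z, f x (c *: y + z) = c *: f x y + f x z),
      (forall x, f x x = 0)
    & (forall x y z, f x (f y z) + f y (f z x) + f z (f x y) = 0)].

(* [U, W] = span of all [u, w], u in U, w in W (by bilinearity, the span of
   the brackets of basis vectors). *)
Definition brsp f (U W : {vspace V}) : {vspace V} :=
  (<< [seq f u w | u <- vbasis U, w <- vbasis W] >>)%VS.

(* lcs_aux f m = C^{m+1} g *)
Fixpoint lcs_aux f (m : nat) : {vspace V} :=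
  if m is m'.+1 then brsp f (lcs_aux f m') fullv else fullv.

(* C^k g, k >= 1 (C^1 g = g) *)
Definition lcs f (k : nat) : {vspace V} := lcs_aux f k.-1.

(* 1-based basis vectors e_h and coordinates P_h w.r.t. a basis tuple. *)
Definition bvec n (eb : n.-tuple V) (h : nat) : V := nth 0 eb h.-1.
Definition bcoord n (eb : n.-tuple V) (h : nat) (u : V) : C :=
  oapp (fun i : 'I_n => coord eb i u) 0 (insub h.-1).

Definition filiform f (n : nat) : Prop :=
  (2 <= n)%N /\ \dim (fullv : {vspace V}) = n /\
  forall k, (2 <= k <= n)%N -> \dim (lcs f k) = (n - k)%N.

Definition adapted_basis f n (eb : n.-tuple V) : Prop :=
  let e := bvec eb in
  [/\ basis_of fullv eb,
      (forall h, (3 <= h <= n)%N -> f (e 1%N) (e h) = e h.-1),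
      (forall h, (1 <= h <= n)%N -> f (e 2%N) (e h) = 0)
    & (forall h, (2 <= h <= n)%N -> f (e 3%N) (e h) = 0)].

Definition is_z1 f n (eb : n.-tuple V) (z : nat) : Prop :=
  let e := bvec eb in
  [/\ (4 <= z)%N, f (e z) (e n) != 0
    & forall k, (4 <= k < z)%N -> f (e k) (e n) = 0].

Definition is_z2 f n (eb : n.-tuple V) (z : nat) : Prop :=
  let e := bvec eb in
  [/\ (4 <= z)%N, f (e z) (e z.+1) != 0
    & forall k, (4 <= k < z)%N -> f (e k) (e k.+1) = 0].

(* pairs (x,y), x<y, whose bracket is prescribed by the general law
   (besides [e_1, _]) *)
Definition law_pair (z1 z2 n x y : nat) : bool :=
  ((z1 <= x <= z2)%N && (y == z2.+1)) ||
  [&& (z1 <= x)%N, (x < y)%N & (z2.+2 <= y <= n)%N].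

(* The general law for the triple (z1,z2,n) with parameters
   alpha_i = a i, gamma_j = g j, beta_{k l} = b k l. *)
Definition general_law f n (eb : n.-tuple V) (z1 z2 : nat)
    (a g : nat -> C) (b : nat -> nat -> C) : Prop :=
  let e := bvec eb in let P := bcoord eb in
  [/\ (forall h, (3 <= h <= n)%N -> f (e 1%N) (e h) = e h.-1),
      (forall i, (i <= z2 - z1)%N ->
         f (e (z1 + i)%N) (e z2.+1) =
         \sum_(0 <= m < i.+1) a m.+1 *: e (i + 2 - m)%N),
      (forall j, (2 <= j <= n - z2)%N ->
         f (e z1) (e (z2 + j)%N) =
         a 1%N *: e j.+1 + \sum_(1 <= m < j) g m *: e (j + 1 - m)%N),
      (forall k l, (2 <= l <= n - z2)%N -> (1 <= k < z2 - z1 + l)%N ->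
         f (e (z1 + k)%N) (e (z2 + l)%N) =
         \sum_(2 <= h < (k + l).+1)
            P h (f (e (z1 + k - 1)%N) (e (z2 + l)%N)
                 + f (e (z1 + k)%N) (e (z2 + l - 1)%N)) *: e h.+1
         + b k l *: e 2%N)
    & (forall x y, (2 <= x)%N -> (x < y <= n)%N -> ~~ law_pair z1 z2 n x y ->
         f (e x) (e y) = 0)].

(* Hilbert polynomial in t = 'X_0, s = 'X_1; the sum is over 1 <= k,l <= n,
   which covers all nonzero terms since C^n g = 0 for filiform g. *)
Definition HP f n : {mpoly int[2]} :=
  \sum_(1 <= k < n.+1) \sum_(1 <= l < n.+1)
     (\dim (brsp f (lcs f k) (lcs f l)))%:R *:
       ('X_(inord 0) ^+ k * 'X_(inord 1) ^+ l).

End LieDefs.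

Definition tv : {mpoly int[2]} := 'X_(inord 0).
Definition sv : {mpoly int[2]} := 'X_(inord 1).

Definition HP0 (n : nat) : {mpoly int[2]} :=
  (n - 2)%:R *: (tv * sv) +
  \sum_(2 <= k < n.-1) (n - k - 1)%:R *: (tv ^+ k * sv + tv * sv ^+ k).

(* Unfolding the recursive clause of the general law from the initial brackets
   [e_5, e_7], [e_5, e_8], [e_5, e_9] expresses every bracket [e_x, e_y],
   2 <= x < y <= 9, in the parameters.  The e_2-coordinates of the Jacobi
   identity for (e_6, e_7, e_9) and (e_7, e_8, e_9) give 3 alpha_1^2 = 0 and
   (2 alpha_2 + 3 gamma_1)(alpha_2 - gamma_1) = 0.  Since z_2 = 6, the bracket
   [e_6, e_7] = alpha_2 e_2 is nonzero, and the quadratic relation then forces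
   gamma_1 <> 0 and gamma_1 + alpha_2 <> 0.  As g is filiform,
   C^k g = <e_2, ..., e_(10-k)>, so each [C^k g, C^l g] is spanned by entries
   of the bracket table; the nonzero pivots alpha_2, gamma_1, gamma_1 + alpha_2
   show that the expected basis vectors are reached.  The Hilbert polynomial is
   then the generating function of the resulting dimensions. *)

From HB Require Import structures.
From mathcomp Require Import all_boot all_order all_algebra.
From mathcomp Require Import mpoly.
From mathcomp Require Import ring zify.
Import Order.TTheory GRing.Theory Num.Theory.
Local Open Scope ring_scope.
Set Implicit Arguments. Unset Strict Implicit. Unset Printing Implicit Defensive.

Section Bracket.
Variables (C : numClosedFieldType) (V : vectType C) (f : V -> V -> V).
Hypothesis fL : forall (c : C) x y z, f (c *: x + y) z = c *: f x z + f y z.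
Hypothesis fR : forall (c : C) x y z, f x (c *: y + z) = c *: f x y + f x z.
Hypothesis falt : forall x, f x x = 0.

Lemma bracketDl x y z : f (x + y) z = f x z + f y z.
Proof. by have := fL 1 x y z; rewrite !scale1r. Qed.

Lemma bracketDr x y z : f x (y + z) = f x y + f x z.
Proof. by have := fR 1 x y z; rewrite !scale1r. Qed.

Lemma bracket0l z : f 0 z = 0.
Proof. by apply: (addrI (f 0 z)); rewrite -bracketDl !addr0. Qed.

Lemma bracket0r z : f z 0 = 0.
Proof. by apply: (addrI (f z 0)); rewrite -bracketDr !addr0. Qed.

Lemma bracketZl c x z : f (c *: x) z = c *: f x z.
Proof. by rewrite -[c *: x]addr0 fL bracket0l addr0. Qed.

Lemma bracketZr c x z : f z (c *: x) = c *: f z x.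
Proof. by rewrite -[c *: x]addr0 fR bracket0r addr0. Qed.

Lemma bracketNr x z : f z (- x) = - f z x.
Proof. by rewrite -scaleN1r bracketZr scaleN1r. Qed.

Lemma bracketC x y : f x y = - f y x.
Proof.
apply/eqP; rewrite -subr_eq0 opprK.
by have := falt (x + y); rewrite bracketDl !bracketDr !falt add0r addr0 => ->.
Qed.

Lemma bracket_suml I (r : seq I) (P : pred I) F z :
  f (\sum_(i <- r | P i) F i) z = \sum_(i <- r | P i) f (F i) z.
Proof. by elim/big_rec2: _ => [|i y1 y2 _ <-]; rewrite ?bracket0l ?bracketDl. Qed.

Lemma bracket_sumr I (r : seq I) (P : pred I) F z :
  f z (\sum_(i <- r | P i) F i) = \sum_(i <- r | P i) f z (F i).
Proof. by elim/big_rec2: _ => [|i y1 y2 _ <-]; rewrite ?bracket0r ?bracketDr. Qed.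

Lemma mem_bracket_span (s t : seq V) u w : u \in <<s>>%VS -> w \in <<t>>%VS ->
  f u w \in <<[seq f x y | x <- s, y <- t]>>%VS.
Proof.
move=> /(@coord_span _ _ _ (in_tuple s)) -> /(@coord_span _ _ _ (in_tuple t)) ->.
rewrite bracket_suml; apply: memv_suml => i _; rewrite bracketZl memvZ //.
rewrite bracket_sumr; apply: memv_suml => j _; rewrite bracketZr memvZ //.
by apply/memv_span/allpairs_f; apply: mem_nth.
Qed.

Lemma mem_brsp (U W : {vspace V}) u w : u \in U -> w \in W -> f u w \in brsp f U W.
Proof.
rewrite -{1}(span_basis (vbasisP U)) -{1}(span_basis (vbasisP W)).
exact: mem_bracket_span.
Qed.

Lemma brsp_subv (U W S : {vspace V}) :
  (forall u w, u \in U -> w \in W -> f u w \in S) -> (brsp f U W <= S)%VS.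
Proof.
move=> H; apply/span_subvP => _ /allpairsP [[x y] /= [xU yW ->]].
by apply: H; apply: vbasis_mem.
Qed.

Lemma brsp_span_subv (s t : seq V) (S : {vspace V}) :
  all (fun x => all (fun y => f x y \in S) t) s -> (brsp f <<s>> <<t>> <= S)%VS.
Proof.
move=> /allP st; apply: brsp_subv => u w us wt.
apply: subvP (mem_bracket_span us wt); apply/span_subvP => _ /allpairsP [[x y] /= [xs yt ->]].
by have /allP := st x xs; apply.
Qed.

Lemma brspC (U W : {vspace V}) : brsp f U W = brsp f W U.
Proof.
by apply: subv_anti; rewrite !brsp_subv // => u w uU wW; rewrite bracketC memvN mem_brsp.
Qed.

Lemma brspS (U U' W W' : {vspace V}) : (U <= U')%VS -> (W <= W')%VS ->
  (brsp f U W <= brsp f U' W')%VS.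
Proof.
move=> /subvP sU /subvP sW; apply: brsp_subv => u w uU wW.
by apply: mem_brsp; [apply: sU | apply: sW].
Qed.

Lemma brsp0l (W : {vspace V}) : brsp f 0 W = 0%VS.
Proof.
apply/eqP; rewrite -subv0; apply: brsp_subv => u w.
by rewrite memv0 => /eqP-> _; rewrite bracket0l mem0v.
Qed.

Lemma lcsS k : (1 <= k)%N -> lcs f k.+1 = brsp f (lcs f k) fullv.
Proof. by case: k. Qed.

Lemma lcs_auxS_subv k : (lcs_aux f k.+1 <= lcs_aux f k)%VS.
Proof. by elim: k => [|k IH]; [apply: subvf | apply: brspS => //; apply: subvv]. Qed.

Lemma lcs_decr k m : (1 <= k <= m)%N -> (lcs f m <= lcs f k)%VS.
Proof.
move=> /andP[k1 km]; rewrite /lcs (_ : m.-1 = m - k + k.-1)%N; last by lia.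
elim: (m - k)%N => [|d IH]; first exact: subvv.
by rewrite addSn; apply: subv_trans IH; apply: lcs_auxS_subv.
Qed.

Lemma brsp_lcs_decr k l k' l' : (1 <= k' <= k)%N -> (1 <= l' <= l)%N ->
  (brsp f (lcs f k) (lcs f l) <= brsp f (lcs f k') (lcs f l'))%VS.
Proof. by move=> kk ll; apply: brspS; apply: lcs_decr. Qed.

End Bracket.

Section Coordinates.
Variables (C : numClosedFieldType) (V : vectType C) (n : nat) (eb : n.-tuple V).

Lemma bcoordD j u v : bcoord eb j (u + v) = bcoord eb j u + bcoord eb j v.
Proof. by rewrite /bcoord; case: insubP => [i _ _|_] /=; rewrite ?linearD ?addr0. Qed.

Lemma bcoordZ j c u : bcoord eb j (c *: u) = c * bcoord eb j u.
Proof. by rewrite /bcoord; case: insubP => [i _ _|_] /=; rewrite ?linearZ ?mulr0. Qed.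

Lemma bcoordN j u : bcoord eb j (- u) = - bcoord eb j u.
Proof. by rewrite -scaleN1r bcoordZ mulN1r. Qed.

Lemma bcoord0 j : bcoord eb j 0 = 0.
Proof. by rewrite -(scale0r (0 : V)) bcoordZ mul0r. Qed.

Lemma bcoord_bvec j h : free eb -> (1 <= j)%N -> (1 <= h <= n)%N ->
  bcoord eb j (bvec eb h) = (j == h)%:R.
Proof.
move=> freeb j1 /andP[h1 hn]; rewrite /bcoord /bvec.
have hi : (h.-1 < n)%N by lia.
case: insubP => [i _ ij|] /=; last by move=> jn; case: eqP => // jh; move: jn; rewrite jh; lia.
rewrite (_ : nth 0 eb h.-1 = eb`_(Ordinal hi)) // coord_free // -val_eqE /= ij.
by case: eqP => E; case: eqP => Ejh //; exfalso; lia.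
Qed.

Lemma eq_from_bcoord u v : basis_of fullv eb ->
  (forall j, (1 <= j <= n)%N -> bcoord eb j u = bcoord eb j v) -> u = v.
Proof.
move=> Beb eq_uv; rewrite (coord_basis Beb (memvf u)) (coord_basis Beb (memvf v)).
have bcoordE (i : 'I_n) w : bcoord eb i.+1 w = coord eb i w.
  by rewrite /bcoord /=; case: insubP => [k _ /val_inj -> | ] //=; rewrite ltn_ord.
by apply: eq_bigr => i _; rewrite -!bcoordE eq_uv // ltn_ord.
Qed.

Lemma free_bvec_iota i m : free eb -> (1 <= i)%N -> (i + m <= n.+1)%N ->
  free [seq bvec eb h | h <- iota i m].
Proof.
move=> freeb i1 im.
have -> : [seq bvec eb h | h <- iota i m] = take m (drop i.-1 eb).
  apply: (@eq_from_nth _ 0).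
    by rewrite size_map size_iota size_take size_drop size_tuple; case: ltnP; lia.
  move=> k; rewrite size_map size_iota => km.
  by rewrite (nth_map 0%N) ?size_iota // nth_iota // nth_take // nth_drop /bvec; congr nth; lia.
move: freeb; rewrite -[X in free X -> _](cat_take_drop i.-1) => /catr_free.
by rewrite -[X in free X -> _](cat_take_drop m) => /catl_free.
Qed.

Lemma dim_span_bvec_iota i m : free eb -> (1 <= i)%N -> (i + m <= n.+1)%N ->
  \dim <<[seq bvec eb h | h <- iota i m]>> = m.
Proof. by move=> freeb i1 im; rewrite (eqP (free_bvec_iota freeb i1 im)) size_map size_iota. Qed.

End Coordinates.

Definition hp569 (k l : nat) : nat := match k, l with
| 1, 1 => 7 | 1, 2 => 6 | 1, 3 => 5 | 1, 4 => 4 | 1, 5 => 3 | 1, 6 => 2 | 1, 7 => 1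
| 2, 1 => 6 | 3, 1 => 5 | 4, 1 => 4 | 5, 1 => 3 | 6, 1 => 2 | 7, 1 => 1
| 2, 2 => 3 | 2, 3 => 3 | 3, 2 => 3 | 2, 4 => 2 | 4, 2 => 2 | 2, 5 => 1 | 5, 2 => 1
| 3, 3 => 1 | 3, 4 => 1 | 4, 3 => 1
| _, _ => 0 end.

Lemma sum_hp569 (R : comNzRingType) (X Y : R) :
  \sum_(1 <= k < 10) \sum_(1 <= l < 10) (hp569 k l)%:R * (X ^+ k * Y ^+ l) =
  7%:R * (X * Y) +
  (6%:R * (X ^+ 2 * Y + X * Y ^+ 2) + 5%:R * (X ^+ 3 * Y + X * Y ^+ 3) +
   4%:R * (X ^+ 4 * Y + X * Y ^+ 4) + 3%:R * (X ^+ 5 * Y + X * Y ^+ 5) +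
   2%:R * (X ^+ 6 * Y + X * Y ^+ 6) + (X ^+ 7 * Y + X * Y ^+ 7)) +
  (3%:R * (X ^+ 2 * Y ^+ 2 + X ^+ 2 * Y ^+ 3 + X ^+ 3 * Y ^+ 2)
      + 2%:R * (X ^+ 2 * Y ^+ 4 + X ^+ 4 * Y ^+ 2)
      + (X ^+ 2 * Y ^+ 5 + X ^+ 5 * Y ^+ 2)
      + (X ^+ 3 * Y ^+ 3 + X ^+ 3 * Y ^+ 4 + X ^+ 4 * Y ^+ 3)).
Proof. by rewrite unlock /=; ring. Qed.

Lemma hp569_sub_HP0 :
  \sum_(1 <= k < 10) \sum_(1 <= l < 10) (hp569 k l)%:R *: (tv ^+ k * sv ^+ l) - HP0 9 =
      3 *: (tv ^+ 2 * sv ^+ 2 + tv ^+ 2 * sv ^+ 3 + tv ^+ 3 * sv ^+ 2)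
      + 2 *: (tv ^+ 2 * sv ^+ 4 + tv ^+ 4 * sv ^+ 2)
      + (tv ^+ 2 * sv ^+ 5 + tv ^+ 5 * sv ^+ 2)
      + (tv ^+ 3 * sv ^+ 3 + tv ^+ 3 * sv ^+ 4 + tv ^+ 4 * sv ^+ 3).
Proof.
under eq_bigr do under eq_bigr do rewrite scaler_nat -mulr_natl.
rewrite sum_hp569 /HP0 /=; do 6 rewrite big_ltn //; rewrite big_geq // !scaler_nat.
by rewrite /subn /=; ring.
Qed.

Lemma natr_mul_sqr_eq0 (R : numDomainType) k (x : R) :
  (0 < k)%N -> k%:R * (x * x) = 0 -> x = 0.
Proof. by move=> k0 /eqP; rewrite !mulf_eq0 pnatr_eq0 orbb (negPf (lt0n_neq0 k0)) => /eqP. Qed.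

Ltac unroll_sums :=
  repeat first [ rewrite big_geq; last by [] | rewrite big_ltn; last by [] ].
Ltac simpl_nat := rewrite /subn /addn /=.

Section Law569.
Variables (C : numClosedFieldType) (V : vectType C) (f : V -> V -> V)
  (eb : 9.-tuple V) (a g : nat -> C) (b : nat -> nat -> C).
Hypothesis fL : forall (c : C) x y z, f (c *: x + y) z = c *: f x z + f y z.
Hypothesis fR : forall (c : C) x y z, f x (c *: y + z) = c *: f x y + f x z.
Hypothesis falt : forall x, f x x = 0.
Hypothesis fjacobi : forall x y z, f x (f y z) + f y (f z x) + f z (f x y) = 0.
Hypothesis gfil : filiform f 9.
Hypothesis eb_adapted : adapted_basis f eb.
Hypothesis z2_eq6 : is_z2 f eb 6.
Hypothesis law : general_law f eb 5 6 a g b.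
Local Notation e := (bvec eb).

Lemma eb_basis : basis_of fullv eb. Proof. by case: eb_adapted. Qed.
Lemma eb_free : free eb. Proof. exact: basis_free eb_basis. Qed.

(* [e_x, e_y] for 2 <= x < y <= 9, unfolded from the general law. *)
Definition law569 (x y : nat) : V := match x, y with
| 5, 7 => a 1 *: e 2
| 6, 7 => a 2 *: e 2 + a 1 *: e 3
| 5, 8 => g 1 *: e 2 + a 1 *: e 3
| 6, 8 => b 1 2 *: e 2 + (g 1 + a 2) *: e 3 + (2 * a 1) *: e 4
| 7, 8 => b 2 2 *: e 2 + b 1 2 *: e 3 + (g 1 + a 2) *: e 4 + (2 * a 1) *: e 5
| 5, 9 => g 2 *: e 2 + g 1 *: e 3 + a 1 *: e 4
| 6, 9 => b 1 3 *: e 2 + (g 2 + b 1 2) *: e 3 + (2 * g 1 + a 2) *: e 4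
          + (3 * a 1) *: e 5
| 7, 9 => b 2 3 *: e 2 + (b 1 3 + b 2 2) *: e 3 + (g 2 + 2 * b 1 2) *: e 4
          + (3 * g 1 + 2 * a 2) *: e 5 + (5 * a 1) *: e 6
| 8, 9 => b 3 3 *: e 2 + b 2 3 *: e 3 + (b 1 3 + b 2 2) *: e 4
          + (g 2 + 2 * b 1 2) *: e 5 + (3 * g 1 + 2 * a 2) *: e 6 + (5 * a 1) *: e 7
| _, _ => 0
end.

Definition bracket569 (x y : nat) : V :=
  if (x < y)%N then law569 x y else - law569 y x.

Ltac by_coords := apply: eq_from_bcoord; first exact: eb_basis;
  let j := fresh "j" in let j1 := fresh "j1" in let j9 := fresh "j9" in
  move=> j /andP[j1 j9];
  rewrite !(bcoordD, bcoordZ, bcoordN, bcoord0) !(bcoord_bvec eb_free) //;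
  move: j j1 j9; do 10 (case; first (by move=> /= *; ring)); by [].

Lemma law569_bvec x y : (2 <= x)%N -> (x < y <= 9)%N -> f (e x) (e y) = law569 x y.
Proof.
case: law => _ law_z2 law_z1 law_rec law0.
have E57 : f (e 5) (e 7) = law569 5 7 by move: (law_z2 0 isT); rewrite big_nat1.
have E67 : f (e 6) (e 7) = law569 6 7.
  by move: (law_z2 1 isT); unroll_sums; simpl_nat => ->; by_coords.
have E58 : f (e 5) (e 8) = law569 5 8.
  by move: (law_z1 2 isT); unroll_sums; simpl_nat => ->; by_coords.
have E59 : f (e 5) (e 9) = law569 5 9.
  by move: (law_z1 3 isT); unroll_sums; simpl_nat => ->; by_coords.
have E68 : f (e 6) (e 8) = law569 6 8.
  by move: (law_rec 1 2 isT isT); simpl_nat; rewrite E58 E67 /=; unroll_sums => ->; by_coords.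
have E78 : f (e 7) (e 8) = law569 7 8.
  by move: (law_rec 2 2 isT isT); simpl_nat; rewrite E68 falt /=; unroll_sums => ->; by_coords.
have E69 : f (e 6) (e 9) = law569 6 9.
  by move: (law_rec 1 3 isT isT); simpl_nat; rewrite E59 E68 /=; unroll_sums => ->; by_coords.
have E79 : f (e 7) (e 9) = law569 7 9.
  by move: (law_rec 2 3 isT isT); simpl_nat; rewrite E69 E78 /=; unroll_sums => ->; by_coords.
have E89 : f (e 8) (e 9) = law569 8 9.
  by move: (law_rec 3 3 isT isT); simpl_nat; rewrite E79 falt /=; unroll_sums => ->; by_coords.
move: x y.
case=> [|[|[|[|[|[|[|[|[|[|x]]]]]]]]]]; case=> [|[|[|[|[|[|[|[|[|[|y]]]]]]]]]] //.
all: try by move=> _ /andP[].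
all: move=> _ _; first [exact: E57 | exact: E67 | exact: E58 | exact: E68 | exact: E78
  | exact: E59 | exact: E69 | exact: E79 | exact: E89 | by apply: law0].
Qed.

Lemma law569_diag x : law569 x x = 0.
Proof. by do 10 (case: x => [|x] //). Qed.

Lemma bracket569_bvec x y : (2 <= x <= 9)%N -> (2 <= y <= 9)%N ->
  f (e x) (e y) = bracket569 x y.
Proof.
move=> /andP[x2 x9] /andP[y2 y9]; rewrite /bracket569.
case: ltngtP => xy.
- by apply: law569_bvec; rewrite ?xy.
- by rewrite (bracketC fL fR falt) law569_bvec ?xy.
- by rewrite xy falt law569_diag oppr0.
Qed.

Ltac jacobi_bcoord x y z j := have := congr1 (bcoord eb j) (fjacobi (e x) (e y) (e z));
  rewrite !bracket569_bvec // /bracket569 /=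
    !(bracketDr fR, bracketZr fR, bracketNr fR, bracket0r fR)
    !bracket569_bvec // /bracket569 /=
    !(bcoordD, bcoordZ, bcoordN, bcoord0) !(bcoord_bvec eb_free) //=.

Lemma alpha1_eq0 : a 1 = 0.
Proof.
jacobi_bcoord 6%N 7%N 9%N 2%N => jac.
by apply: (@natr_mul_sqr_eq0 _ 3) => //; rewrite -jac; ring.
Qed.

Lemma alpha2_gamma1_rel : (2 * a 2 + 3 * g 1) * (a 2 - g 1) = 0.
Proof.
jacobi_bcoord 7%N 8%N 9%N 2%N => jac.
by rewrite alpha1_eq0 in jac; rewrite -[RHS]oppr0 -jac; ring.
Qed.

Lemma alpha2_neq0 : a 2 != 0.
Proof.
case: z2_eq6 => _ + _; rewrite bracket569_bvec // /bracket569 /= alpha1_eq0.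
by rewrite scale0r addr0; apply: contraNneq => ->; rewrite scale0r.
Qed.

Lemma gamma1_neq0 : g 1 != 0.
Proof.
apply/eqP => g1_0; move/eqP: alpha2_neq0; apply; apply: (@natr_mul_sqr_eq0 _ 2) => //.
by rewrite -alpha2_gamma1_rel g1_0; ring.
Qed.

Lemma gamma1_alpha2_neq0 : g 1 + a 2 != 0.
Proof.
apply/eqP => ga0; move/eqP: gamma1_neq0; apply; apply: (@natr_mul_sqr_eq0 _ 2) => //.
have a2E : a 2 = - g 1 by apply/eqP; rewrite -addr_eq0 addrC ga0.
by rewrite -[RHS]oppr0 -alpha2_gamma1_rel a2E; ring.
Qed.

Lemma bvec_in_lcs k h : (1 <= k)%N -> (2 <= h)%N -> (h + k <= 10)%N -> e h \in lcs f k.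
Proof.
elim: k h => // k IH h _ h2 hk; case: k IH hk => [|k] IH hk; first exact: memvf.
have -> : e h = - f (e h.+1) (e 1).
  by rewrite -(bracketC fL fR falt); case: eb_adapted => _ e1E _ _; rewrite e1E //; lia.
by rewrite lcsS // memvN (mem_brsp fL fR) ?memvf //; apply: IH => //; lia.
Qed.

Lemma lcs_span k : (2 <= k <= 9)%N -> lcs f k = <<[seq e h | h <- iota 2 (9 - k)]>>%VS.
Proof.
move=> k29; apply/eqP; rewrite eq_sym eqEdim; apply/andP; split.
  by apply/span_subvP => v /mapP [h]; rewrite mem_iota => h_k ->; apply: bvec_in_lcs; lia.
by case: gfil => _ [_ ->] //; rewrite dim_span_bvec_iota //; [exact: eb_free | lia].
Qed.

Lemma lcs10 : lcs f 10 = 0%VS.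
Proof. by rewrite lcsS // lcs_span // span_nil brsp0l. Qed.

Lemma dim_brsp_lcs1 l : (1 <= l <= 9)%N -> \dim (brsp f (lcs f 1) (lcs f l)) = (8 - l)%N.
Proof.
move=> /andP[l1 l9]; rewrite (brspC fL fR falt) -lcsS //.
case: (ltnP l 9) => [l_lt9 | l_ge9]; first by case: gfil => _ [_ ->] //; lia.
have -> : l = 9%N by lia.
by rewrite lcs10 dimv0.
Qed.

Ltac solve_memv := rewrite ?(alpha1_eq0, mulr0, mul0r, scale0r, addr0, add0r, oppr0, memvN);
  repeat first [ apply: mem0v | apply: memvD | apply: memvZ | apply: memv_line
    | (apply: memv_span; rewrite !inE eqxx ?orbT //) ].

Ltac brsp_lcs_by_table :=
  rewrite !lcs_span //; apply: (brsp_span_subv fL fR); simpl_nat;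
  rewrite !bracket569_bvec // /bracket569 /=; repeat (apply/andP; split); solve_memv.

Lemma brsp_lcs26 : brsp f (lcs f 2) (lcs f 6) = 0%VS.
Proof. by apply/eqP; rewrite -subv0; brsp_lcs_by_table. Qed.

Lemma brsp_lcs35 : brsp f (lcs f 3) (lcs f 5) = 0%VS.
Proof. by apply/eqP; rewrite -subv0; brsp_lcs_by_table. Qed.

Lemma brsp_lcs44 : brsp f (lcs f 4) (lcs f 4) = 0%VS.
Proof. by apply/eqP; rewrite -subv0; brsp_lcs_by_table. Qed.

Lemma bracket_bvec_in_brsp_lcs k l x y : (1 <= k)%N -> (1 <= l)%N ->
  (2 <= x)%N -> (2 <= y)%N -> (x + k <= 10)%N -> (y + l <= 10)%N ->
  f (e x) (e y) \in brsp f (lcs f k) (lcs f l).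
Proof. by move=> *; apply: (mem_brsp fL fR); apply: bvec_in_lcs. Qed.

Lemma bvec2_in_brsp_lcs43 : e 2 \in brsp f (lcs f 4) (lcs f 3).
Proof.
have := @bracket_bvec_in_brsp_lcs 4 3 6 7 isT isT isT isT isT isT.
rewrite bracket569_bvec // /bracket569 /= alpha1_eq0 scale0r addr0.
by rewrite rpredZeq (negPf alpha2_neq0).
Qed.

Lemma bvec2_in_brsp_lcs25 : e 2 \in brsp f (lcs f 2) (lcs f 5).
Proof.
have := @bracket_bvec_in_brsp_lcs 2 5 8 5 isT isT isT isT isT isT.
rewrite bracket569_bvec // /bracket569 /= alpha1_eq0 scale0r addr0.
by rewrite memvN rpredZeq (negPf gamma1_neq0).
Qed.

Lemma bvec2_in_brsp_lcs24 : e 2 \in brsp f (lcs f 2) (lcs f 4).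
Proof. by apply: subvP bvec2_in_brsp_lcs25; apply: (brsp_lcs_decr fL fR). Qed.

Lemma bvec3_in_brsp_lcs24 : e 3 \in brsp f (lcs f 2) (lcs f 4).
Proof.
have := @bracket_bvec_in_brsp_lcs 2 4 8 6 isT isT isT isT isT isT.
rewrite bracket569_bvec // /bracket569 /= alpha1_eq0 mulr0 scale0r addr0 memvN.
rewrite rpredDl ?rpredZeq ?(negPf gamma1_alpha2_neq0) //.
by rewrite bvec2_in_brsp_lcs24 orbT.
Qed.

Lemma brsp_lcs24_subv23 : (brsp f (lcs f 2) (lcs f 4) <= brsp f (lcs f 2) (lcs f 3))%VS.
Proof. exact: (brsp_lcs_decr fL fR). Qed.

Lemma bvec4_in_brsp_lcs23 : e 4 \in brsp f (lcs f 2) (lcs f 3).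
Proof.
have := @bracket_bvec_in_brsp_lcs 2 3 8 7 isT isT isT isT isT isT.
rewrite bracket569_bvec // /bracket569 /= alpha1_eq0 mulr0 scale0r addr0 memvN.
rewrite rpredDl ?rpredZeq ?(negPf gamma1_alpha2_neq0) //.
by apply: rpredD; apply: rpredZ; apply: (subvP brsp_lcs24_subv23);
  [exact: bvec2_in_brsp_lcs24 | exact: bvec3_in_brsp_lcs24].
Qed.

Lemma brsp_lcs33 : brsp f (lcs f 3) (lcs f 3) = <[e 2]>%VS.
Proof.
apply/eqP; rewrite eqEsubv; apply/andP; split; first by brsp_lcs_by_table.
by rewrite -memvE; apply: subvP bvec2_in_brsp_lcs43; apply: (brsp_lcs_decr fL fR).
Qed.

Lemma brsp_lcs34 : brsp f (lcs f 3) (lcs f 4) = <[e 2]>%VS.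
Proof.
apply/eqP; rewrite eqEsubv; apply/andP; split.
  by rewrite -brsp_lcs33; apply: (brsp_lcs_decr fL fR).
by rewrite -memvE (brspC fL fR falt) bvec2_in_brsp_lcs43.
Qed.

Lemma brsp_lcs25 : brsp f (lcs f 2) (lcs f 5) = <[e 2]>%VS.
Proof.
apply/eqP; rewrite eqEsubv; apply/andP; split; first by brsp_lcs_by_table.
by rewrite -memvE bvec2_in_brsp_lcs25.
Qed.

Lemma brsp_lcs24 : brsp f (lcs f 2) (lcs f 4) = <<[:: e 2; e 3]>>%VS.
Proof.
apply/eqP; rewrite eqEsubv; apply/andP; split; first by brsp_lcs_by_table.
apply/span_subvP => v; rewrite !inE => /orP[]/eqP->;
  [exact: bvec2_in_brsp_lcs24 | exact: bvec3_in_brsp_lcs24].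
Qed.

Lemma brsp_lcs23 : brsp f (lcs f 2) (lcs f 3) = <<[:: e 2; e 3; e 4]>>%VS.
Proof.
apply/eqP; rewrite eqEsubv; apply/andP; split; first by brsp_lcs_by_table.
apply/span_subvP => v; rewrite !inE => /or3P[]/eqP->; last exact: bvec4_in_brsp_lcs23.
all: apply: (subvP brsp_lcs24_subv23).
- exact: bvec2_in_brsp_lcs24.
- exact: bvec3_in_brsp_lcs24.
Qed.

Lemma brsp_lcs22 : brsp f (lcs f 2) (lcs f 2) = <<[:: e 2; e 3; e 4]>>%VS.
Proof.
apply/eqP; rewrite eqEsubv; apply/andP; split; first by brsp_lcs_by_table.
by rewrite -brsp_lcs23; apply: (brsp_lcs_decr fL fR).
Qed.

Lemma brsp_lcs_eq0 k l : (2 <= k)%N -> (2 <= l)%N ->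
  [|| (6 <= l)%N, (6 <= k)%N, (3 <= k)%N && (5 <= l)%N,
      (5 <= k)%N && (3 <= l)%N | (4 <= k)%N && (4 <= l)%N] ->
  brsp f (lcs f k) (lcs f l) = 0%VS.
Proof.
move=> k2 l2 kl; apply/eqP; rewrite -subv0.
case/or4P: kl => [l6|k6|/andP[k3 l5]|/orP[/andP[k5 l3]|/andP[k4 l4]]].
- by rewrite -brsp_lcs26 (brsp_lcs_decr fL fR) //; apply/andP.
- by rewrite (brspC fL fR falt) -brsp_lcs26 (brsp_lcs_decr fL fR) //; apply/andP.
- by rewrite -brsp_lcs35 (brsp_lcs_decr fL fR) //; apply/andP.
- by rewrite (brspC fL fR falt) -brsp_lcs35 (brsp_lcs_decr fL fR) //; apply/andP.
- by rewrite -brsp_lcs44 (brsp_lcs_decr fL fR) //; apply/andP.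
Qed.

Lemma dim_span_bvec_iota2 m : (1 <= m <= 8)%N -> \dim <<[seq e h | h <- iota 2 m]>> = m.
Proof. by case/andP=> _ m8; apply: dim_span_bvec_iota eb_free _ _; lia. Qed.

Lemma dim_brsp_lcs k l : (1 <= k <= 9)%N -> (1 <= l <= 9)%N ->
  \dim (brsp f (lcs f k) (lcs f l)) = hp569 k l.
Proof.
have dim_e2 : \dim <[e 2]> = 1%N by rewrite -span_seq1 (@dim_span_bvec_iota2 1).
move: k l.
case=> [|[|[|[|[|[|[|[|[|[|k]]]]]]]]]]; case=> [|[|[|[|[|[|[|[|[|[|l]]]]]]]]]] //.
all: try by move=> _ /andP[].
all: try by move=> /andP[].
all: move=> _ _; first [ by rewrite dim_brsp_lcs1
  | by rewrite (brspC fL fR falt) dim_brsp_lcs1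
  | by rewrite brsp_lcs22 (@dim_span_bvec_iota2 3)
  | by rewrite brsp_lcs23 (@dim_span_bvec_iota2 3)
  | by rewrite (brspC fL fR falt) brsp_lcs23 (@dim_span_bvec_iota2 3)
  | by rewrite brsp_lcs24 (@dim_span_bvec_iota2 2)
  | by rewrite (brspC fL fR falt) brsp_lcs24 (@dim_span_bvec_iota2 2)
  | by rewrite brsp_lcs25 dim_e2 | by rewrite (brspC fL fR falt) brsp_lcs25 dim_e2
  | by rewrite brsp_lcs33 dim_e2 | by rewrite brsp_lcs34 dim_e2
  | by rewrite (brspC fL fR falt) brsp_lcs34 dim_e2
  | by rewrite brsp_lcs_eq0 // dimv0 ].
Qed.

Lemma HP_569 : HP f 9 = \sum_(1 <= k < 10) \sum_(1 <= l < 10) (hp569 k l)%:R *: (tv ^+ k * sv ^+ l).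
Proof.
apply: eq_big_nat => k k_range; apply: eq_big_nat => l l_range.
by rewrite dim_brsp_lcs //; lia.
Qed.

End Law569.

Theorem mainTheorem18 (C : numClosedFieldType) (V : vectType C)
  (f : V -> V -> V) (eb : 9.-tuple V)
  (a g : nat -> C) (b : nat -> nat -> C) :
  is_lie_bracket f ->
  filiform f 9 ->
  adapted_basis f eb ->
  is_z1 f eb 5 ->
  is_z2 f eb 6 ->
  general_law f eb 5 6 a g b ->
  let e := bvec eb in
  let Cs := lcs f in
  (a 1%N = 0 /\
      (2 * a 2%N + 3 * g 1%N) * (a 2%N - g 1%N) = 0 /\
      g 1%N != 0) /\
     ((
      brsp f (Cs 3%N) (Cs 3%N) = <[e 2%N]>%VS /\ brsp f (Cs 3%N) (Cs 4%N) = <[e 2%N]>%VS) /\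
      brsp f (Cs 3%N) (Cs 5%N) = 0%VS /\
      brsp f (Cs 2%N) (Cs 6%N) = 0%VS /\
      brsp f (Cs 2%N) (Cs 5%N) = <[e 2%N]>%VS /\
      brsp f (Cs 2%N) (Cs 4%N) = << [:: e 2%N; e 3%N] >>%VS /\
      (
      brsp f (Cs 2%N) (Cs 2%N) = << [:: e 2%N; e 3%N; e 4%N] >>%VS /\
      brsp f (Cs 2%N) (Cs 3%N) = << [:: e 2%N; e 3%N; e 4%N] >>%VS)) /\
    HP f 9 - HP0 9 =
      3 *: (tv ^+ 2 * sv ^+ 2 + tv ^+ 2 * sv ^+ 3 + tv ^+ 3 * sv ^+ 2)
      + 2 *: (tv ^+ 2 * sv ^+ 4 + tv ^+ 4 * sv ^+ 2)
      + (tv ^+ 2 * sv ^+ 5 + tv ^+ 5 * sv ^+ 2)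
      + (tv ^+ 3 * sv ^+ 3 + tv ^+ 3 * sv ^+ 4 + tv ^+ 4 * sv ^+ 3).
Proof.
(* z_1 = 5 is already built into the general law. *)
move=> [fL fR falt fjacobi] gfil eb_adapted _ z2_eq6 law e Cs.
split; first by split; [|split];
  [apply: alpha1_eq0 law | apply: alpha2_gamma1_rel law | apply: gamma1_neq0 law].
split; last by rewrite (HP_569 fL fR falt fjacobi gfil eb_adapted z2_eq6 law) hp569_sub_HP0.
by do !split; [apply: brsp_lcs33 law | apply: brsp_lcs34 law | apply: brsp_lcs35 law
  | apply: brsp_lcs26 law | apply: brsp_lcs25 law | apply: brsp_lcs24 law
  | apply: brsp_lcs22 law | apply: brsp_lcs23 law].
Qed.
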